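(* Let $\Omega$ be a finite set, $G\le\mathrm{Sym}(\Omega)$ and $1\le k\le |\Omega|$. The following are equivalent: (1) $G$ has the ordered $k$-ut property; (2) for every transformation $t\in T(\Omega)$ of rank $k$, $\langle G,t\rangle=EG$, where $E$ is the set of idempotents of $\langle G,t\rangle$.
   Context: $T(\Omega)$ is the full transformation monoid on $\Omega$, with maps acting on the right; the rank of $t$ is $|\Omega t|$. $\langle G,t\rangle$ is the subsemigroup generated by $G\cup\{t\}$ and $EG=\{eg:e\in E, g\in G\}$. $G$ has the ordered $k$-ut property if for every $k$-tuple $(a_1,\dots,a_k)$ of distinct points of $\Omega$ and every ordered partition $(P_1,\dots,P_k)$ of $\Omega$ into $k$ nonempty parts there is $g\in G$ with $a_ig\in P_i$ for all $i$. *)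

From mathcomp Require Import all_boot all_fingroup.
Set Implicit Arguments. Unset Strict Implicit. Unset Printing Implicit Defensive.

Section TransfDefs.
Variable T : finType.

(* Full transformation monoid T(Omega): maps T -> T, acting on the right:
   x (f * g) = (x f) g, i.e. tcomp f g = "first f, then g". *)
Definition transf := {ffun T -> T}.

Definition tcomp (f g : transf) : transf := [ffun x => g (f x)].

Definition perm_tr (p : {perm T}) : transf := [ffun x => p x].

Definition trank (t : transf) : nat := #|[set t x | x in T]|.

Inductive gen_sg (G : {set {perm T}}) (t : transf) : transf -> Prop :=
  | gen_perm : forall g, g \in G -> gen_sg G t (perm_tr g)
  | gen_t : gen_sg G t t
  | gen_comp : forall f h, gen_sg G t f -> gen_sg G t h -> gen_sg G t (tcomp f h).

Definition idempotent_tr (e : transf) : Prop := tcomp e e = e.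

Definition in_EG (G : {set {perm T}}) (t : transf) (f : transf) : Prop :=
  exists e g, [/\ gen_sg G t e, idempotent_tr e, g \in G & f = tcomp e (perm_tr g)].

Definition ordered_kut (G : {set {perm T}}) (k : nat) : Prop :=
  forall (a : k.-tuple T) (P : 'I_k -> {set T}),
    uniq a ->
    (forall i, P i != set0) ->
    (forall i j, i != j -> [disjoint P i & P j]) ->
    (forall x : T, exists i, x \in P i) ->
    exists2 g, g \in G & forall i : 'I_k, g (tnth a i) \in P i.

End TransfDefs.

From mathcomp Require Import all_boot all_fingroup.
Set Implicit Arguments. Unset Strict Implicit. Unset Printing Implicit Defensive.

(* An element of <G, t> is either a permutation or has rank at most rank t.
   If G is ordered k-ut and f has rank r <= k (ordered k-ut implies ordered
   r-ut), some g in G maps each point of the image of f into its own kernel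
   class, i.e. f g f = f; then e = f g is an idempotent of <G, t> and
   f = e g^-1.  Conversely, given distinct points a_i and an ordered partition
   (P_i), apply the hypothesis to the rank-k map t sending P_i to a_i: from
   t = e h with e idempotent one gets t h^-1 t = t, i.e. h^-1 a_i lies in P_i. *)

Section Transformations.
Variable T : finType.
Implicit Types (G : {set {perm T}}) (e f t : transf T).

(* The ordered k-ut property, with the tuple replaced by an injection [a] and
   the ordered partition by its index map [p] (the part P_i is the fibre of i). *)
Definition ordered_kut_fun G k :=
  forall (a : 'I_k -> T) (p : T -> 'I_k),
    injective a -> (forall i, exists x, p x = i) ->
    exists2 g, g \in G & forall i, p (g (a i)) = i.

Lemma partition_index k (P : 'I_k -> {set T}) :
    (forall i j, i != j -> [disjoint P i & P j]) -> (forall x, exists i, x \in P i) ->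
  exists p : T -> 'I_k, forall x i, (x \in P i) = (p x == i).
Proof.
move=> disjP coverP; have [p Pp] := fin_all_exists coverP.
exists p => x i; apply/idP/eqP => [xPi | <-]; last exact: Pp.
apply/eqP; apply: contraTT xPi => ne; rewrite (disjointFr (disjP _ _ ne)) //; exact: Pp.
Qed.

Lemma ordered_kut_funE G k : ordered_kut G k <-> ordered_kut_fun G k.
Proof.
split=> [utG a p inj_a surj_p | utG a P uniq_a nzP disjP coverP].
  have [|i|i j|x|g gG ag] := utG [tuple a i | i < k] (fun i => [set x | p x == i]).
  - by apply/tuple_uniqP => i j; rewrite !tnth_mktuple => /inj_a.
  - by apply/set0Pn; have [x px] := surj_p i; exists x; rewrite inE px.
  - move=> ne_ij; rewrite -setI_eq0; apply/eqP/setP => x; rewrite !inE.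
    by apply: contraNF ne_ij => /andP[/eqP <- /eqP <-].
  - by exists (p x); rewrite inE.
  by exists g => // i; move: (ag i); rewrite inE tnth_mktuple => /eqP.
have [p Pp] := partition_index disjP coverP.
have [||g gG ag] := utG (tnth a) p; first exact/tuple_uniqP.
  by move=> i; have /set0Pn[x] := nzP i; rewrite Pp => /eqP px; exists x.
by exists g => // i; rewrite Pp ag.
Qed.

Lemma exists_notin (A : {set T}) : #|A| < #|T| -> exists x, x \notin A.
Proof.
move=> ltAT; have /subsetPn[x _ xA] : ~~ ([set: T] \subset A).
  by rewrite subTset; apply: contraTneq ltAT => ->; rewrite cardsT ltnn.
by exists x.
Qed.

(* A new point b is appended to the tuple, and a point x0 that represents no
   part is split off as a new singleton part; the old parts minus x0 stay
   nonempty. *)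
Lemma ordered_kut_fun_pred G j : j < #|T| ->
  ordered_kut_fun G j.+1 -> ordered_kut_fun G j.
Proof.
move=> ltjT utG a p inj_a surj_p.
have small (f : 'I_j -> T) : #|[set f i | i in 'I_j]| < #|T|.
  by apply: leq_ltn_trans ltjT; rewrite -[j in _ <= j]card_ord leq_imset_card.
have [b b_new] := exists_notin (small a).
have [r pr] := fin_all_exists surj_p.
have [x0 x0_new] := exists_notin (small r).
pose a' i := if unlift ord_max i is Some i' then a i' else b.
pose p' x := if x == x0 then ord_max else lift ord_max (p x).
have [||g gG ag] := utG a' p'.
- rewrite /a' => i1 i2; case: unliftP => [i1' ->|->]; case: unliftP => [i2' ->|->] //.
  + by move/inj_a ->.
  + by move=> ai1; case/imsetP: b_new; exists i1'.
  + by move=> ai2; case/imsetP: b_new; exists i2'.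
- move=> i; case: (unliftP ord_max i) => [i' ->|->]; last by exists x0; rewrite /p' eqxx.
  exists (r i'); rewrite /p' pr ifN //.
  by apply: contraNneq x0_new => <-; rewrite imset_f.
exists g => // i; have := ag (lift ord_max i); rewrite /a' /p' liftK.
by case: eqP => [_ /eqP|_ /lift_inj //]; rewrite (negbTE (neq_lift _ _)).
Qed.

Lemma ordered_kut_fun_le G j k : j <= k -> k <= #|T| ->
  ordered_kut_fun G k -> ordered_kut_fun G j.
Proof.
elim: k => [|k IHk]; first by rewrite leqn0 => /eqP ->.
rewrite leq_eqVlt => /predU1P[-> // | ltjk] ltkT utG.
exact: IHk ltjk (ltnW ltkT) (ordered_kut_fun_pred ltkT utG).
Qed.

Lemma perm_trM (g h : {perm T}) : tcomp (perm_tr g) (perm_tr h) = perm_tr (g * h).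
Proof. by apply/ffunP => x; rewrite !ffunE permM. Qed.

Lemma trank_tcompl f h : trank (tcomp f h) <= trank f.
Proof.
rewrite /trank; have -> : [set tcomp f h x | x in T] = h @: [set f x | x in T].
  by rewrite -imset_comp; apply: eq_imset => x; rewrite ffunE.
exact: leq_imset_card.
Qed.

Lemma trank_tcompr f h : trank (tcomp f h) <= trank h.
Proof.
apply: subset_leq_card; apply/subsetP => _ /imsetP[x _ ->].
by rewrite ffunE imset_f.
Qed.

Lemma trank_inj_surj k (a : 'I_k -> T) (p : T -> 'I_k) :
  injective a -> (forall i, exists x, p x = i) -> trank [ffun x => a (p x)] = k.
Proof.
move=> inj_a surj_p; rewrite /trank -[RHS]card_ord -(card_imset _ inj_a).
apply: eq_card => y; apply/imsetP/imsetP => [[x _ ->] | [i _ ->]].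
  by exists (p x); rewrite ?ffunE.
by have [x <-] := surj_p i; exists x; rewrite ?ffunE.
Qed.

Lemma gen_sg_perm_or_rank (G : {group {perm T}}) t f : gen_sg G t f ->
  (exists2 g, g \in G & f = perm_tr g) \/ trank f <= trank t.
Proof.
elim=> [g gG | | f1 f2 _ [[g1 g1G ->] | rank_f1] _ [[g2 g2G ->] | rank_f2]].
- by left; exists g.
- by right.
- by left; exists (g1 * g2)%g; rewrite ?groupM ?perm_trM.
- by right; apply: leq_trans (trank_tcompr _ _) rank_f2.
- by right; apply: leq_trans (trank_tcompl _ _) rank_f1.
- by right; apply: leq_trans (trank_tcompl _ _) rank_f1.
Qed.

Lemma in_EG_gen_sg G t f : in_EG G t f -> gen_sg G t f.
Proof. by case=> e [g [? _ gG ->]]; apply: gen_comp => //; apply: gen_perm. Qed.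

Lemma in_EG_perm (G : {group {perm T}}) t g : g \in G -> in_EG G t (perm_tr g).
Proof.
move=> gG; exists (perm_tr 1), g; split=> //; first exact/gen_perm/group1.
  by rewrite /idempotent_tr perm_trM mulg1.
by rewrite perm_trM mul1g.
Qed.

Lemma in_EG_of_retract (G : {group {perm T}}) t f g :
  gen_sg G t f -> g \in G -> (forall x, f (g (f x)) = f x) -> in_EG G t f.
Proof.
move=> f_gen gG fgf; exists (tcomp f (perm_tr g)), g^-1%g; split.
- by apply: gen_comp => //; apply: gen_perm.
- by apply/ffunP => x; rewrite !ffunE fgf.
- by rewrite groupV.
- by apply/ffunP => x; rewrite !ffunE permK.
Qed.

Lemma ordered_kut_fun_retract G f :
  ordered_kut_fun G (trank f) -> exists2 g, g \in G & forall x, f (g (f x)) = f x.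
Proof.
set A := [set f x | x in T] => utG.
have Af x : f x \in A by rewrite imset_f.
pose p x := enum_rank_in (Af x) (f x).
have pK x : enum_val (p x) = f x by rewrite enum_rankK_in.
have [||g gG ag] := utG enum_val p; first exact: enum_val_inj.
  by move=> i; have /imsetP[x _ ex] := enum_valP i; exists x; apply: enum_val_inj; rewrite pK.
by exists g => // x; rewrite -[in RHS]pK -(ag (p x)) !pK.
Qed.

Lemma idempotent_perm_factor e t (h : {perm T}) :
  idempotent_tr e -> t = tcomp e (perm_tr h) -> forall x, t (h^-1%g (t x)) = t x.
Proof.
move=> idem_e -> x; rewrite !ffunE permK.
by have := congr1 (fun f => f x) idem_e; rewrite ffunE => ->.
Qed.

End Transformations.

Theorem lemma3p1 (T : finType) (G : {group {perm T}}) (k : nat) :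
  0 < k <= #|T| ->
  (ordered_kut G k <->
   forall t : transf T, trank t = k ->
     forall f : transf T, gen_sg G t f <-> in_EG G t f).
Proof.
case/andP=> _ leq_kT; split.
  move=> /ordered_kut_funE utG t rank_t f; split; last exact: in_EG_gen_sg.
  move=> f_gen; case: (gen_sg_perm_or_rank f_gen) => [[g gG ->] | rank_f].
    exact: in_EG_perm.
  have [|g gG fgf] := @ordered_kut_fun_retract _ G f.
    by apply: ordered_kut_fun_le utG; rewrite // -rank_t.
  exact: in_EG_of_retract fgf.
move=> EG; apply/ordered_kut_funE => a p inj_a surj_p; pose t : transf T := [ffun x => a (p x)].
have [e [h [_ idem_e hG t_eh]]] := (EG t (trank_inj_surj inj_a surj_p) t).1 (gen_t G t).
exists h^-1%g => [|i]; first by rewrite groupV.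
have [x <-] := surj_p i; apply: inj_a.
by have := idempotent_perm_factor idem_e t_eh x; rewrite !ffunE.
Qed.
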